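(* Let $R$ be a finite commutative local Frobenius ring with residue field $\mathbb{F}_q$, and let $\ell$ be a nonnegative integer. Let $C$ be a linear code over $R$ of length $n$ with generator matrix $\mathrm{G}$ and parity check matrix $\mathrm{H}$. Then $\dim(\texttt{Hull}(C))=\ell$ if and only if $\texttt{Rank}_q(\mathrm{G}\mathrm{G}^\top)=\texttt{Rank}_q(\mathrm{G})-\ell$ or $\texttt{Rank}_q(\mathrm{H}\mathrm{H}^\top)=\texttt{Rank}_q(\mathrm{H})-\ell$.
   Context: A linear code of length $n$ over $R$ is an $R$-submodule of $R^n$; $\dim(C):=\log_q|C|$. $C^\perp$ is the dual with respect to the standard inner product $\sum_j u_jc_j$, and $\texttt{Hull}(C):=C\cap C^\perp$. A generator matrix of $C$ is a matrix whose rows generate $C$; a parity check matrix is a generator matrix of $C^\perp$. For a matrix $\mathrm{A}$ over $R$, $\texttt{Rank}_q(\mathrm{A}):=\log_q|M|$ where $M$ is the $R$-submodule spanned by the rows of $\mathrm{A}$. *)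

From mathcomp Require Import all_boot all_order all_algebra.
Set Implicit Arguments. Unset Strict Implicit. Unset Printing Implicit Defensive.
Import GRing.Theory.
Local Open Scope ring_scope.

Section RingDefs.
Variable R : finComNzRingType.

Definition is_ideal (I : {set R}) : Prop :=
  [/\ 0 \in I, (forall x y, x \in I -> y \in I -> x + y \in I)
    & (forall r x, x \in I -> r * x \in I)].

Definition is_maximal_ideal (M : {set R}) : Prop :=
  [/\ is_ideal M, (1 \notin M)
    & forall J : {set R}, is_ideal J -> M \subset J -> J = M \/ J = [set: R]].

Definition is_minimal_ideal (I : {set R}) : Prop :=
  [/\ is_ideal I, I != [set 0]
    & forall J : {set R}, is_ideal J -> J \subset I -> J = [set 0] \/ J = I].

Definition is_local_ring : Prop :=
  exists M, is_maximal_ideal M /\ forall M', is_maximal_ideal M' -> M' = M.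

(* For a finite commutative local ring, Frobenius <=> unique minimal ideal
   (the socle is simple). *)
Definition is_frobenius_local : Prop :=
  exists I, is_minimal_ideal I /\ forall I', is_minimal_ideal I' -> I' = I.

(* The residue field R/M has q elements, for the maximal ideal M. *)
Definition residue_field_order (q : nat) : Prop :=
  forall M, is_maximal_ideal M -> #|[set: R]| = (q * #|M|)%N.

Definition is_linear_code (n : nat) (C : {set 'rV[R]_n}) : Prop :=
  [/\ 0 \in C, (forall u v, u \in C -> v \in C -> u + v \in C)
    & (forall (r : R) v, v \in C -> r *: v \in C)].

Definition inner (n : nat) (u v : 'rV[R]_n) : R := \sum_(j < n) u 0 j * v 0 j.

Definition dual_code (n : nat) (C : {set 'rV[R]_n}) : {set 'rV[R]_n} :=
  [set u | [forall c in C, inner u c == 0]].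

Definition hull (n : nat) (C : {set 'rV[R]_n}) : {set 'rV[R]_n} :=
  C :&: dual_code C.

Definition rowspan (k n : nat) (A : 'M[R]_(k, n)) : {set 'rV[R]_n} :=
  [set x *m A | x : 'rV[R]_k].

(* dim(C) = log_q |C| (|C| is a power of q, so the truncated log is exact). *)
Definition dimq (q : nat) (n : nat) (C : {set 'rV[R]_n}) : nat :=
  trunc_log q #|C|.

Definition rankq (q : nat) (k n : nat) (A : 'M[R]_(k, n)) : nat :=
  trunc_log q #|rowspan A|.

End RingDefs.

From HB Require Import structures.
From mathcomp Require Import all_boot all_order all_algebra zify.
Set Implicit Arguments. Unset Strict Implicit. Unset Printing Implicit Defensive.
Import GRing.Theory.
Local Open Scope ring_scope.

(* Over a finite local ring with maximal ideal M and residue field of order q,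
   every submodule of R^n has a composition series all of whose factors are
   R/M, so its cardinality is a power of q and Rank_q, dim are exact
   logarithms.  The map c |-> c G^T sends the row module of G onto that of
   G G^T with kernel Hull(C), whence Rank_q(G) = Rank_q(G G^T) + dim Hull(C).
   The same count for H needs Hull(C^perp) = Hull(C), i.e. C^perp^perp = C.
   This follows from |D| |D^perp| = |R^n| for every code D, proved along a
   composition series: for a cover T < D = T + R s, pairing with s maps
   T^perp into the annihilator of M with kernel D^perp, and that
   annihilator has only q elements because R is Frobenius. *)

Lemma card_imset_ker (A B : finZmodType) (f : A -> B) (S : {set A}) :
    (forall x y, f (x - y) = f x - f y) ->
    (forall x y, x \in S -> y \in S -> x - y \in S) ->
  #|S| = (#|f @: S| * #|[set x in S | f x == 0%R]|)%N.
Proof.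
move=> fB SB; set K := [set x in S | f x == 0].
rewrite -sum1_card (partition_big f (mem (f @: S))) /=; last first.
  by move=> x xS; apply: imset_f.
rewrite -sum_nat_const; apply: eq_bigr => _ /imsetP[x0 x0S ->].
have f0 : f 0 = 0 by rewrite -(subrr x0) fB subrr.
have S0 : 0 \in S by rewrite -(subrr x0) SB.
rewrite sum1dep_card -(card_imset K (addrI x0)); apply: eq_card => x.
rewrite inE; apply/andP/imsetP => [[xS /eqP fx]|[k]].
  exists (x - x0); last by rewrite addrC subrK.
  by rewrite inE SB // fB fx subrr eqxx.
rewrite inE => /andP[kS /eqP fk] ->.
have -> : x0 + k = x0 - (0 - k) by rewrite sub0r opprK.
by rewrite !SB // !fB fk f0 !subr0.
Qed.

Section Ideals.
Variable R : finComNzRingType.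

Definition principal_ideal (x : R) : {set R} := [set r * x | r in [set: R]].

Definition ann (I : {set R}) : {set R} := [set x | [forall m in I, m * x == 0]].

Lemma ideal_setT : is_ideal [set: R].
Proof. by split=> *; rewrite inE. Qed.

Lemma principal_idealP x : is_ideal (principal_ideal x).
Proof.
split; first by apply/imsetP; exists 0; rewrite ?inE ?mul0r.
  move=> _ _ /imsetP[r1 _ ->] /imsetP[r2 _ ->].
  by apply/imsetP; exists (r1 + r2); rewrite ?inE ?mulrDl.
by move=> r _ /imsetP[r1 _ ->]; apply/imsetP; exists (r * r1); rewrite ?inE ?mulrA.
Qed.

Lemma mem_principal_ideal x : x \in principal_ideal x.
Proof. by apply/imsetP; exists 1; rewrite ?inE ?mul1r. Qed.

Lemma principal_ideal_sub (I : {set R}) x :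
  is_ideal I -> x \in I -> principal_ideal x \subset I.
Proof. by case=> _ _ IZ xI; apply/subsetP => _ /imsetP[r _ ->]; apply: IZ. Qed.

Lemma ann_mull I r x : x \in ann I -> r * x \in ann I.
Proof.
rewrite !inE => /forall_inP Ix; apply/forall_inP => m mI.
by rewrite mulrCA (eqP (Ix m mI)) mulr0.
Qed.

End Ideals.

Section Codes.
Variables (R : finComNzRingType) (n : nat).
Local Notation V := 'rV[R]_n.
Implicit Types (C D E T : {set V}) (J : {set R}) (s t u v : V).

Definition codeb C : bool :=
  [&& 0 \in C, [forall u in C, [forall v in C, u + v \in C]]
    & [forall r : R, [forall v in C, r *: v \in C]]].

Lemma codeP C : reflect (is_linear_code C) (codeb C).
Proof.
apply: (iffP and3P) => [[C0 /forall_inP CD /forallP CZ]|[C0 CD CZ]]; split=> //.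
- by move=> u v uC; move/forall_inP: (CD u uC); apply.
- by move=> r; move/forall_inP: (CZ r); apply.
- by apply/forall_inP => u uC; apply/forall_inP => v vC; apply: CD.
- by apply/forallP => r; apply/forall_inP => v vC; apply: CZ.
Qed.

Section CodeTheory.
Variable C : {set V}.
Hypothesis codeC : codeb C.

Lemma code0 : 0 \in C. Proof. by case/codeP: codeC. Qed.

Lemma codeD u v : u \in C -> v \in C -> u + v \in C.
Proof. by case/codeP: codeC => _ CD _; apply: CD. Qed.

Lemma codeZ r v : v \in C -> r *: v \in C.
Proof. by case/codeP: codeC => _ _ CZ; apply: CZ. Qed.

Lemma codeB u v : u \in C -> v \in C -> u - v \in C.
Proof. by move=> uC vC; rewrite codeD // -scaleN1r codeZ. Qed.

End CodeTheory.

Lemma code_set0 : codeb [set 0 : V].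
Proof.
apply/codeP; split=> [|u v|r v]; rewrite ?inE //.
  by move=> /eqP-> /eqP->; rewrite addr0.
by move=> /eqP->; rewrite scaler0.
Qed.

Lemma code_setT : codeb [set: V].
Proof. by apply/codeP; split=> *; rewrite inE. Qed.

Lemma code_setI C D : codeb C -> codeb D -> codeb (C :&: D).
Proof.
move=> cC cD; apply/codeP; split=> [|u v|r v]; rewrite !inE.
- by rewrite (code0 cC) (code0 cD).
- by move=> /andP[uC uD] /andP[vC vD]; rewrite (codeD cC) ?(codeD cD).
- by move=> /andP[vC vD]; rewrite (codeZ cC) ?(codeZ cD).
Qed.

Lemma inner_mx u v : inner u v = (u *m v^T) 0 0.
Proof. by rewrite mxE; apply: eq_bigr => j _; rewrite mxE. Qed.

Lemma innerC u v : inner u v = inner v u.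
Proof. by apply: eq_bigr => j _; rewrite mulrC. Qed.

Lemma innerBl u v (w : V) : inner (u - v) w = inner u w - inner v w.
Proof. by rewrite /inner -sumrB; apply: eq_bigr => j _; rewrite !mxE mulrBl. Qed.

Lemma innerDr u v (w : V) : inner u (v + w) = inner u v + inner u w.
Proof. by rewrite /inner -big_split; apply: eq_bigr => j _; rewrite !mxE mulrDr. Qed.

Lemma innerZr r u v : inner u (r *: v) = r * inner u v.
Proof. by rewrite /inner mulr_sumr; apply: eq_bigr => j _; rewrite !mxE mulrCA. Qed.

Lemma inner0l u : inner 0 u = 0.
Proof. by rewrite /inner big1 // => j _; rewrite mxE mul0r. Qed.

Lemma dual_codeP C : codeb (dual_code C).
Proof.
apply/codeP; split=> [|u v|r v]; rewrite !inE.
- by apply/forall_inP => c _; rewrite inner0l.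
- move=> /forall_inP uC /forall_inP vC; apply/forall_inP => c cC.
  by rewrite innerC innerDr !(innerC c) (eqP (uC c cC)) (eqP (vC c cC)) addr0.
- move=> /forall_inP vC; apply/forall_inP => c cC.
  by rewrite innerC innerZr innerC (eqP (vC c cC)) mulr0.
Qed.

Lemma hull_code C : codeb C -> codeb (hull C).
Proof. by move=> codeC; apply: code_setI codeC (dual_codeP C). Qed.

Lemma sub_dual_code C D : C \subset D -> dual_code D \subset dual_code C.
Proof.
move=> /subsetP CD; apply/subsetP => u; rewrite !inE => /forall_inP uD.
by apply/forall_inP => c cC; apply: uD; apply: CD.
Qed.

Lemma sub_dual_codeK C : C \subset dual_code (dual_code C).
Proof.
apply/subsetP => c cC; rewrite inE; apply/forall_inP => u.
by rewrite inE innerC => /forall_inP; apply.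
Qed.

Lemma dual_code_set0 : dual_code [set 0 : V] = [set: V].
Proof.
apply/setP => u; rewrite !inE; apply/forall_inP => c.
by rewrite inE innerC => /eqP->; rewrite inner0l.
Qed.

Lemma dual_code_setT : dual_code [set: V] = [set 0].
Proof.
apply/eqP; rewrite eqEsubset sub1set (code0 (dual_codeP _)) andbT.
apply/subsetP => u; rewrite !inE => /forall_inP u_perp.
apply/eqP/rowP => i; rewrite mxE -(eqP (u_perp (delta_mx 0 i) (in_setT _))).
rewrite /inner (bigD1 i) //= big1 => [|j ji]; rewrite !mxE /=.
  by rewrite eqxx mulr1 addr0.
by rewrite (negbTE ji) mulr0.
Qed.

Definition code_cover T D : Prop :=
  [/\ codeb T, codeb D, T \proper D &
      forall E, codeb E -> T \subset E -> E \subset D -> E = T \/ E = D].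

Lemma code_ind_down (P : {set V} -> Prop) :
    P [set 0] -> (forall T D, code_cover T D -> P T -> P D) ->
  forall D, codeb D -> P D.
Proof.
move=> P0 PS D.
suff: forall k D, (#|D| < k)%N -> codeb D -> P D by apply.
elim=> // k IH {}D ltDk cD.
have [->|D_nz] := eqVneq D [set 0]; first exact: P0.
pose below E := codeb E && (E \proper D).
have below0 : below [set 0].
  by rewrite /below code_set0 properEneq eq_sym D_nz sub1set code0.
case: (arg_maxnP (fun E : {set V} => #|E|) below0) => T /andP[cT TD] Tmax.
have coverTD : code_cover T D.
  split=> // E cE TE ED; have [->|E_neq] := eqVneq E D; [by right | left].
  apply/eqP; rewrite eq_sym eqEcard TE; apply: Tmax.
  by rewrite /below cE properEneq E_neq.
by apply: PS coverTD (IH T _ cT); have := proper_card TD; lia.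
Qed.

Lemma code_ind_up (P : {set V} -> Prop) :
    P [set: V] -> (forall T D, code_cover T D -> P D -> P T) ->
  forall D, codeb D -> P D.
Proof.
move=> PT PS D.
suff: forall k D, (#|~: D| < k)%N -> codeb D -> P D by apply.
elim=> // k IH {}D ltDk cD.
have [->|D_nfull] := eqVneq D [set: V]; first exact: PT.
pose above E := codeb E && (D \proper E).
have aboveD : above [set: V] by rewrite /above code_setT properEneq D_nfull subsetT.
case: (arg_minnP (fun E : {set V} => #|E|) aboveD) => D' /andP[cD' DD'] D'min.
have coverDD' : code_cover D D'.
  split=> // E cE DE ED'; have [->|E_neq] := eqVneq E D; [by left | right].
  apply/eqP; rewrite eqEcard ED'; apply: D'min.
  by rewrite /above cE properEneq eq_sym E_neq.
apply: PS coverDD' (IH D' _ cD').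
have : ~: D' \proper ~: D by rewrite properC.
by move/proper_card; lia.
Qed.

Definition code_ext J s T : {set V} :=
  [set p.1 *: s + p.2 | p in setX J T].

Definition conductor s T : {set R} := [set r | r *: s \in T].

Lemma mem_code_ext J s T r t :
  r \in J -> t \in T -> r *: s + t \in code_ext J s T.
Proof. by move=> rJ tT; apply/imsetP; exists (r, t); rewrite ?inE ?rJ. Qed.

Lemma code_extP J s T : is_ideal J -> codeb T -> codeb (code_ext J s T).
Proof.
case=> J0 JD JZ cT; apply/codeP; split.
- by rewrite -[0]addr0 -{1}(scale0r s) mem_code_ext ?code0.
- move=> _ _ /imsetP[[a t] /setXP[/= aJ tT] ->] /imsetP[[b u] /setXP[/= bJ uT] ->].
  by rewrite addrACA -scalerDl mem_code_ext ?JD ?codeD.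
- move=> r _ /imsetP[[a t] /setXP[/= aJ tT] ->].
  by rewrite scalerDr scalerA mem_code_ext ?JZ ?codeZ.
Qed.

Lemma sub_code_ext J s T : 0 \in J -> T \subset code_ext J s T.
Proof.
by move=> J0; apply/subsetP => t tT; rewrite -[t]add0r -(scale0r s) mem_code_ext.
Qed.

Lemma code_ext_sub J s T D :
  codeb D -> s \in D -> T \subset D -> code_ext J s T \subset D.
Proof.
move=> cD sD /subsetP TD; apply/subsetP => _ /imsetP[[a t] /setXP[_ tT] ->].
by apply: codeD; [|apply: codeZ|apply: TD].
Qed.

Lemma conductor_ideal s T : codeb T -> is_ideal (conductor s T).
Proof.
move=> cT; split=> [|a b|r a]; rewrite !inE ?scale0r ?code0 //.
  by rewrite scalerDl; apply: codeD.
by rewrite -scalerA; apply: codeZ.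
Qed.

Lemma cover_code_ext T D s :
  code_cover T D -> s \in D -> s \notin T -> code_ext [set: R] s T = D.
Proof.
move=> [cT cD /proper_sub TD Tcov] sD sNT.
have [extT|//] := Tcov _ (code_extP s (ideal_setT R) cT)
  (sub_code_ext s T (in_setT 0)) (code_ext_sub _ cD sD TD).
have := mem_code_ext s (in_setT 1) (code0 cT).
by rewrite scale1r addr0 extT (negbTE sNT).
Qed.

Lemma rowspan_code k (A : 'M[R]_(k, n)) : codeb (rowspan A).
Proof.
apply/codeP; split=> [|_ _ /imsetP[x _ ->] /imsetP[y _ ->]|r _ /imsetP[x _ ->]].
- by apply/imsetP; exists 0; rewrite ?mul0mx.
- by apply/imsetP; exists (x + y); rewrite ?mulmxDl.
- by apply/imsetP; exists (r *: x); rewrite ?scalemxAl.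
Qed.

Lemma mulmx_trmx_eq0 k (A : 'M[R]_(k, n)) c :
  (c *m A^T == 0) = (c \in dual_code (rowspan A)).
Proof.
rewrite inE; apply/eqP/forall_inP => [cA _ /imsetP[x _ ->]|c_perp].
  by rewrite inner_mx trmx_mul mulmxA cA mul0mx mxE.
apply/rowP => i; rewrite !mxE.
rewrite (_ : \sum_j _ = inner c (row i A)); last by apply: eq_bigr => j _; rewrite !mxE.
by apply/eqP/c_perp/imsetP; exists (delta_mx 0 i); rewrite -?rowE.
Qed.

Lemma card_rowspan_hull k (A : 'M[R]_(k, n)) :
  #|rowspan A| = (#|rowspan (A *m A^T)| * #|hull (rowspan A)|)%N.
Proof.
rewrite (@card_imset_ker _ _ (mulmx^~ A^T) _ (fun x y => mulmxBl x y A^T)); last first.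
  exact: codeB (rowspan_code A).
have -> : [set x in rowspan A | x *m A^T == 0] = hull (rowspan A).
  by apply/setP => c; rewrite in_setI -mulmx_trmx_eq0 inE.
congr (_ * _)%N; apply: eq_card => y.
apply/imsetP/imsetP => [[_ /imsetP[x _ ->] ->]|[x _ ->]].
  by exists x; rewrite ?mulmxA.
by exists (x *m A); [apply/imsetP; exists x | rewrite mulmxA].
Qed.

End Codes.

(* The bare product R * 'rV_n does not inherit a finZmodType instance. *)
Definition coef_row (R : finComNzRingType) n := (R * 'rV[R]_n)%type.
HB.instance Definition _ (R : finComNzRingType) n :=
  GRing.Zmodule.on (coef_row R n).
HB.instance Definition _ (R : finComNzRingType) n := Finite.on (coef_row R n).

Section LocalRing.
Variables (R : finComNzRingType) (q : nat) (M : {set R}).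
Hypothesis maxM : is_maximal_ideal M.
Hypothesis maxM_uniq : forall M', is_maximal_ideal M' -> M' = M.
Hypothesis cardR : #|[set: R]| = (q * #|M|)%N.

Lemma card_max_ideal_gt0 : (0 < #|M|)%N.
Proof. by case: maxM => -[M0 _ _] _ _; apply/card_gt0P; exists 0. Qed.

Lemma residue_card_gt1 : (1 < q)%N.
Proof.
have : (#|M| < #|[set: R]|)%N.
  case: maxM => _ M1 _; apply: proper_card; rewrite properT.
  by apply/eqP => MT; rewrite MT inE in M1.
by rewrite cardR -[X in (X < _)%N]mul1n ltn_pmul2r ?card_max_ideal_gt0.
Qed.

Lemma card_principal_ann x : x \in ann M -> x != 0 -> #|principal_ideal x| = q.
Proof.
move=> /[!inE] /forall_inP xM x_nz.
have := @card_imset_ker R R (fun r => r * x) [set: R] (fun a b => mulrBl x a b).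
rewrite cardR => /(_ (fun a b _ _ => in_setT _)).
set K := [set r in [set: R] | r * x == 0].
suff -> : K = M by move/eqP; rewrite eqn_pmul2r ?card_max_ideal_gt0 // => /eqP.
have idK : is_ideal K.
  split=> [|a b|r a]; rewrite !inE /= ?mul0r ?eqxx //.
    by move=> /eqP ax /eqP bx; rewrite mulrDl ax bx addr0.
  by move=> /eqP ax; rewrite -mulrA ax mulr0.
have MK : M \subset K by apply/subsetP => m mM; rewrite !inE xM.
case: maxM => _ _ /(_ K idK MK) [//|KT].
by have := in_setT (1 : R); rewrite -KT !inE mul1r (negbTE x_nz).
Qed.

Lemma principal_ann_minimal x :
  x \in ann M -> x != 0 -> is_minimal_ideal (principal_ideal x).
Proof.
move=> xM x_nz; split; first exact: principal_idealP.
  by apply: contraNneq x_nz => x0; have := mem_principal_ideal x; rewrite x0 inE.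
move=> J idJ Jx; have [J0|/subsetPn[y yJ]] := boolP (J \subset [set 0]).
  by left; apply/eqP; rewrite eqEsubset J0 sub1set; case: idJ.
rewrite inE => y_nz; right; apply/eqP; rewrite eqEcard Jx /=.
have yM : y \in ann M by have /imsetP[r _ ->] := subsetP Jx y yJ; apply: ann_mull.
rewrite card_principal_ann // -(card_principal_ann yM y_nz).
exact/subset_leq_card/principal_ideal_sub.
Qed.

Section Covers.
Variable n : nat.
Local Notation V := 'rV[R]_n.
Implicit Types (D T : {set V}) (s : V).

Lemma cover_conductor T D s :
  code_cover T D -> s \in D -> s \notin T -> conductor s T = M.
Proof.
move=> coverTD sD sNT; have [cT cD /proper_sub TD Tcov] := coverTD.
apply: maxM_uniq; split; first exact: conductor_ideal.
  by rewrite inE scale1r.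
move=> J idJ condJ; have [J0 JD JZ] := idJ.
have [extT|extD] := Tcov _ (code_extP s idJ cT) (sub_code_ext s T J0)
  (code_ext_sub _ cD sD TD).
  left; apply/eqP; rewrite eqEsubset condJ andbT; apply/subsetP => j jJ.
  by rewrite inE -extT -[_ *: s]addr0 mem_code_ext ?code0.
right; move: sD; rewrite -extD => /imsetP[[j t] /setXP[/= jJ tT] s_jt].
have : 1 - j \in conductor s T.
  by rewrite inE scalerBl scale1r {1}s_jt (addrC (j *: s)) addrK.
move/(subsetP condJ) => J1j; have J1 : 1 \in J by rewrite -(subrK j 1) JD.
by apply/setP => r; rewrite inE -[r]mulr1 JZ.
Qed.

Lemma card_cover T D : code_cover T D -> #|D| = (q * #|T|)%N.
Proof.
move=> coverTD; have [cT _ /properP[_ [s sD sNT]] _] := coverTD.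
pose f (p : coef_row R n) := p.1 *: s + p.2.
have fB p p' : f (p - p') = f p - f p'.
  by case: p p' => [a t] [b u]; rewrite /f /= scalerBl opprD addrACA.
have TB p p' : p \in setX [set: R] T -> p' \in setX [set: R] T ->
    p - p' \in setX [set: R] T.
  by case: p p' => [a t] [b u] /setXP[_ tT] /setXP[_ uT]; rewrite inE in_setT codeB.
have := @card_imset_ker _ _ f (setX [set: R] T) fB TB.
have -> : f @: setX [set: R] T = D by exact: cover_code_ext coverTD sD sNT.
have -> : [set p in setX [set: R] T | f p == 0] =
          (fun r => (r, - (r *: s))) @: conductor s T.
  apply/setP => [[a t]]; rewrite !inE /=; apply/andP/imsetP.
    move=> [tT /eqP fat]; have t_eq : t = - (a *: s).
      by apply/eqP; rewrite -addr_eq0 addrC -fat.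
    by exists a; rewrite ?t_eq // inE -[a *: s]opprK -t_eq -scaleN1r codeZ.
  move=> [r]; rewrite inE => rsT [-> ->].
  by rewrite -scaleN1r codeZ // /f /= scaleN1r subrr.
rewrite card_imset => [|r r' [] //].
rewrite cardsX cardR (cover_conductor coverTD sD sNT) mulnAC => /eqP.
by rewrite eqn_pmul2r ?card_max_ideal_gt0 // => /eqP.
Qed.

Lemma card_code_pow D : codeb D -> exists e, #|D| = (q ^ e)%N.
Proof.
move: D; apply: (code_ind_down (P := fun D => exists e, #|D| = (q ^ e)%N)).
  by exists 0%N; rewrite cards1.
move=> T D coverTD [e cardT].
by exists e.+1; rewrite expnS -cardT (card_cover coverTD).
Qed.

End Covers.

Lemma rankq_hull n k (A : 'M[R]_(k, n)) :
  rankq q A = (rankq q (A *m A^T) + dimq q (hull (rowspan A)))%N.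
Proof.
rewrite /rankq /dimq card_rowspan_hull.
have [b ->] := card_code_pow (rowspan_code (A *m A^T)).
have [h ->] := card_code_pow (hull_code (rowspan_code A)).
by rewrite -expnD !trunc_expnK // residue_card_gt1.
Qed.

Hypothesis frobR : is_frobenius_local R.

Lemma card_ann_le : (#|ann M| <= q)%N.
Proof.
have [I [_ I_uniq]] := frobR.
have [A0|/subsetPn[x xM]] := boolP (ann M \subset [set 0]).
  by rewrite (leq_trans (subset_leq_card A0)) // cards1 ltnW // residue_card_gt1.
rewrite inE => x_nz; rewrite -(card_principal_ann xM x_nz) subset_leq_card //.
apply/subsetP => y yM; have [->|y_nz] := eqVneq y 0.
  by case: (principal_idealP x).
rewrite (I_uniq _ (principal_ann_minimal xM x_nz)).
by rewrite -(I_uniq _ (principal_ann_minimal yM y_nz)) mem_principal_ideal.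
Qed.

Section Duality.
Variable n : nat.
Local Notation V := 'rV[R]_n.
Implicit Types (C D T : {set V}).

Lemma card_dual_cover T D :
  code_cover T D -> (#|dual_code T| <= q * #|dual_code D|)%N.
Proof.
move=> coverTD; have [cT _ /properP[TD [s sD sNT]] _] := coverTD.
pose pair_s u := inner u s.
rewrite (@card_imset_ker _ _ pair_s _ (fun u v => innerBl u v s)); last first.
  exact: codeB (dual_codeP T).
have -> : [set u in dual_code T | inner u s == 0] = dual_code D.
  apply/setP => u; rewrite inE; apply/andP/idP => [[uT /eqP us]|uD]; last first.
    rewrite (subsetP (sub_dual_code TD)) //.
    by move: uD; rewrite inE => /forall_inP->.
  rewrite inE -(cover_code_ext coverTD sD sNT); apply/forall_inP.
  move=> _ /imsetP[[a t] /setXP[_ tT] ->]; move: uT; rewrite inE => /forall_inP uT.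
  by rewrite /= innerDr innerZr us mulr0 add0r uT.
rewrite leq_mul2r (leq_trans _ card_ann_le) ?orbT // subset_leq_card //.
apply/subsetP => _ /imsetP[u uT ->]; rewrite inE; apply/forall_inP => m mM.
rewrite -innerZr; move: uT; rewrite inE => /forall_inP-> //.
by rewrite -(cover_conductor coverTD sD sNT) inE in mM.
Qed.

Lemma card_code_mul_dual D : codeb D -> (#|D| * #|dual_code D|)%N = #|[set: V]|.
Proof.
have cover_mono T D' : code_cover T D' ->
    (#|T| * #|dual_code T| <= #|D'| * #|dual_code D'|)%N.
  move=> coverTD; rewrite (card_cover coverTD) (mulnC q) -mulnA.
  by rewrite leq_mul2l card_dual_cover ?orbT.
move=> cD; apply/eqP; rewrite eqn_leq; apply/andP; split.
  move: D cD; apply: (code_ind_up (P := fun D => _ <= #|[set: V]|)%N).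
    by rewrite dual_code_setT cards1 muln1.
  move=> T D coverTD le_D.
  exact: leq_trans (cover_mono _ _ coverTD) le_D.
move: D cD; apply: (code_ind_down (P := fun D => #|[set: V]| <= _)%N).
  by rewrite dual_code_set0 cards1 mul1n.
move=> T D coverTD le_T.
exact: leq_trans le_T (cover_mono _ _ coverTD).
Qed.

Lemma dual_codeK C : codeb C -> dual_code (dual_code C) = C.
Proof.
move=> cC; apply/esym/eqP; rewrite eqEcard sub_dual_codeK /=.
have dual_gt0 : (0 < #|dual_code C|)%N.
  by apply/card_gt0P; exists 0; apply: code0 (dual_codeP C).
rewrite -(leq_pmul2l dual_gt0) card_code_mul_dual ?dual_codeP //.
by rewrite mulnC card_code_mul_dual.
Qed.

End Duality.

End LocalRing.

Theorem corollary3p13 (R : finComNzRingType) (q : nat) (l : nat)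
    (n k k' : nat) (C : {set 'rV[R]_n})
    (G : 'M[R]_(k, n)) (H : 'M[R]_(k', n)) :
  is_local_ring R -> is_frobenius_local R -> residue_field_order R q ->
  is_linear_code C ->
  rowspan G = C -> rowspan H = dual_code C ->
  (dimq q (hull C) = l <->
   ((rankq q (G *m G^T))%:Z = (rankq q G)%:Z - l%:Z \/
    (rankq q (H *m H^T))%:Z = (rankq q H)%:Z - l%:Z)).
Proof.
move=> [M [maxM maxM_uniq]] frobR /(_ M maxM) cardR /codeP cC defC defCperp.
have hullH : hull (rowspan H) = hull C.
  by rewrite /hull defCperp (dual_codeK maxM maxM_uniq cardR frobR cC) setIC.
have rkG := rankq_hull maxM maxM_uniq cardR G.
have rkH := rankq_hull maxM maxM_uniq cardR H.
rewrite defC in rkG; rewrite hullH in rkH.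
by rewrite rkG rkH; split=> [<-|[]]; lia.
Qed.
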